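(* In the standing setup, suppose $\gamma$ is diagonalisable over $k$ and $\mathcal L$ is a subgroup of $k^\times$. Then the coordinate ring $k[C^{(\mathcal L)}_{\mathbf G}(\gamma)]$ is the maximal quotient algebra of $k[\mathbf G]$ on which all eigenvalues of $\gamma$ lie in $\mathcal L$; that is, $C^{(\mathcal L)}_{\mathbf G}(\gamma)$ is the closed subscheme of $\mathbf G$ defined by the ideal of $k[\mathbf G]$ generated by all eigenvectors of $\gamma$ in $k[\mathbf G]$ whose eigenvalues lie outside $\mathcal L$.
   Context: Standing setup: $\mathbf G$ an affine algebraic group over a field $k$ (not necessarily smooth or connected) with a faithful finite-dimensional representation $\mathbf G\to\mathrm{GL}(\mathbf V)$; $\gamma\in N_{\mathrm{GL}(V)}(\mathbf G)(k)$ diagonalisable ($\gamma$ need not lie in $G$); $\gamma$ acts on $k[\mathbf G]$ through its conjugation action on $\mathbf G$. For a subgroup $\mathcal L\subseteq k^\times$, the $\mathcal L$-close $\lambda$-eigenspace of $\gamma$ in $\mathbf V$ is the sum of the eigenspaces with eigenvalues in $\lambda\mathcal L$; $C^{(\mathcal L)}_{\mathrm{GL}(\mathbf V)}(\gamma)$ is the subgroup of $\mathrm{GL}(\mathbf V)$ stabilising every $\mathcal L$-close eigenspace of $\gamma$, and $C^{(\mathcal L)}_{\mathbf G}(\gamma)=\mathbf G\cap C^{(\mathcal L)}_{\mathrm{GL}(\mathbf V)}(\gamma)$ (scheme-theoretic intersection). *)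

From HB Require Import structures.
From mathcomp Require Import all_boot all_algebra.
From mathcomp Require Import mpoly.
Set Implicit Arguments. Unset Strict Implicit. Unset Printing Implicit Defensive.
Import GRing.Theory.
Local Open Scope ring_scope.

Definition ideal_gen (R : comNzRingType) (S : R -> Prop) : R -> Prop :=
  fun f => exists s : seq (R * R),
      (forall p, p \in s -> S p.2) /\ f = \sum_(p <- s) p.1 * p.2.

Definition is_ideal (R : comNzRingType) (I : R -> Prop) : Prop :=
  [/\ I 0, (forall f g, I f -> I g -> I (f + g)) & (forall r f, I f -> I (r * f))].

(* Coordinate ring of GL_n over k:  k[GL_n] = k[x_ij, t]/(t det(x) - 1).
   Variables are indexed by  option ('I_n * 'I_n):  Some (i,j) is x_ij,
   None is t = det^{-1}.  We work in the polynomial ring P = k[x_ij, t]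
   and represent closed subschemes of GL_n by ideals of P containing
   t det(x) - 1. *)

Definition vT (n : nat) := option ('I_n * 'I_n).
Definition nV (n : nat) := #|{: vT n}|.
Definition Pol (k : fieldType) (n : nat) := {mpoly k[nV n]}.

Section GLCoords.
Variables (k : fieldType) (n : nat).

Definition var (v : vT n) : Pol k n := 'X_(enum_rank v).
Definition xv (i j : 'I_n) : Pol k n := var (Some (i, j)).
Definition tv : Pol k n := var None.

Definition Xmat : 'M[Pol k n]_n := \matrix_(i, j) xv i j.

Definition Cmat (p q : nat) (A : 'M[k]_(p, q)) : 'M[Pol k n]_(p, q) :=
  map_mx (@mpolyC (nV n) k) A.

Definition GLrel : Pol k n := tv * \det Xmat - 1.

Definition substv (M : nat) (H : vT n -> {mpoly k[M]}) (p : Pol k n)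
  : {mpoly k[M]} :=
  mmap (@mpolyC M k) (fun a => H (enum_val a)) p.

(* P (x) P  as a polynomial ring in two copies of the variables *)
Definition nV2 := #|{: (vT n + vT n)%type}|.
Definition Pol2 := {mpoly k[nV2]}.
Definition varL (v : vT n) : Pol2 := 'X_(enum_rank (inl v : (vT n + vT n)%type)).
Definition varR (v : vT n) : Pol2 := 'X_(enum_rank (inr v : (vT n + vT n)%type)).
Definition inL (p : Pol k n) : Pol2 := substv varL p.
Definition inR (p : Pol k n) : Pol2 := substv varR p.

Definition comult (p : Pol k n) : Pol2 :=
  substv (fun v => match v with
                   | Some (i, j) => \sum_(l < n) varL (Some (i, l)) * varR (Some (l, j))
                   | None => varL None * varR None
                   end) p.

Definition antipode (p : Pol k n) : Pol k n :=
  substv (fun v => match v with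
                   | Some (i, j) => tv * (\adj Xmat) i j
                   | None => \det Xmat
                   end) p.

Definition counit (p : Pol k n) : k :=
  p.@[fun a => match enum_val a with
               | Some (i, j) => (i == j)%:R
               | None => 1
               end].

(* An ideal I of P = k[x_ij,t] defines a closed subgroup scheme of GL_n
   (i.e. G together with its faithful representation G -> GL(V), V = k^n):
   I contains t det - 1 and is a Hopf ideal. *)
Definition closed_subgroup_ideal (I : Pol k n -> Prop) : Prop :=
  [/\ is_ideal I, I GLrel,
      (forall f, I f ->
         ideal_gen (fun g => exists h, I h /\ (g = inL h \/ g = inR h)) (comult f)),
      (forall f, I f -> I (antipode f)) &
      (forall f, I f -> counit f = 0)].

(* Action of gamma in GL_n(k) on P (hence on k[G]) through conjugation:
   (gamma . f)(g) = f(gamma^-1 g gamma). *)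
Definition conj_act (gamma : 'M[k]_n) (f : Pol k n) : Pol k n :=
  substv (fun v => match v with
                   | Some (i, j) => (Cmat (invmx gamma) *m Xmat *m Cmat gamma) i j
                   | None => tv
                   end) f.

Definition normalises (gamma : 'M[k]_n) (I : Pol k n -> Prop) : Prop :=
  gamma \in unitmx /\
  (forall f, I f -> I (conj_act gamma f) /\ I (conj_act (invmx gamma) f)).

Definition subgroup_units (L : k -> Prop) : Prop :=
  [/\ (forall x, L x -> x != 0), L 1,
      (forall x y, L x -> L y -> L (x * y)) & (forall x, L x -> L x^-1)].

Definition Lclose_eigsp (L : k -> Prop) (gamma : 'M[k]_n) (lam : k)
    (w : 'cV[k]_n) : Prop :=
  exists s : seq (k * 'cV[k]_n),
    (forall p, p \in s ->
        (exists mu, L mu /\ p.1 = lam * mu) /\ gamma *m p.2 = p.1 *: p.2)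
    /\ w = \sum_(p <- s) p.2.

(* Generators of the ideal defining C^{(L)}_{GL(V)}(gamma): for each
   L-close eigenspace W, each w in W and each linear form phi vanishing on W,
   the function g |-> phi(g w).  (g stabilises W iff all these vanish.) *)
Definition CGL_gens (L : k -> Prop) (gamma : 'M[k]_n) (f : Pol k n) : Prop :=
  exists (lam : k) (w : 'cV[k]_n) (phi : 'rV[k]_n),
    [/\ Lclose_eigsp L gamma lam w,
        (forall u, Lclose_eigsp L gamma lam u -> phi *m u = 0) &
        f = (Cmat phi *m Xmat *m Cmat w) ord0 ord0].

(* f (mod I) is an eigenvector of gamma in k[G] = P/I whose eigenvalue
   lies outside L. *)
Definition eigvec_outside (L : k -> Prop) (gamma : 'M[k]_n)
    (I : Pol k n -> Prop) (f : Pol k n) : Prop :=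
  exists lam : k, [/\ ~ L lam, ~ I f & I (conj_act gamma f - lam *: f)].

End GLCoords.

(** Diagonalise [gamma] as [Q gamma Q^-1 = diag (d_a)].  In the coordinates
    [y_ab = (row a Q) X (col b Q^-1)] of the generic matrix [X], conjugation by
    [gamma] scales [y_ab] by [d_b / d_a], and [C^(L)_GL(V)(gamma)] is cut out by
    the [y_ab] with [d_b / d_a] outside [L].  As the [y_ab] and [t] generate
    [k[GL_n]], modulo the ideal [K] generated by these [y_ab] and [I] every
    function is a sum of eigenvectors with eigenvalues in [L]; an eigenvector of
    [k[G]] with eigenvalue outside [L] is then forced into [K] by separation of
    eigenvalues.  Conversely, each of these [y_ab] either vanishes on [G] or is
    such an eigenvector. *)

From HB Require Import structures.
From mathcomp Require Import all_boot all_algebra.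
From mathcomp Require Import mpoly.
From Stdlib Require Import Classical.
Set Implicit Arguments. Unset Strict Implicit. Unset Printing Implicit Defensive.
Import GRing.Theory.
Local Open Scope ring_scope.

Section IdealGen.
Variable R : comNzRingType.
Implicit Types (S T : R -> Prop) (f g : R).

Lemma ideal_gen_mem S g : S g -> ideal_gen S g.
Proof.
move=> Sg; exists [:: (1, g)]; rewrite big_seq1 mul1r.
by split=> // p; rewrite inE => /eqP ->.
Qed.

Lemma ideal_gen0 S : ideal_gen S 0.
Proof. by exists [::]; rewrite big_nil. Qed.

Lemma ideal_genD S f g : ideal_gen S f -> ideal_gen S g -> ideal_gen S (f + g).
Proof.
move=> [s [Hs ->]] [t [Ht ->]]; exists (s ++ t); split; last by rewrite big_cat.
by move=> p; rewrite mem_cat => /orP [/Hs|/Ht].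
Qed.

Lemma ideal_genMl S r f : ideal_gen S f -> ideal_gen S (r * f).
Proof.
move=> [s [Hs ->]]; exists [seq (r * p.1, p.2) | p <- s]; split.
  by move=> p /mapP [q /Hs Hq ->].
by rewrite big_map mulr_sumr; apply: eq_bigr => p _; rewrite mulrA.
Qed.

Lemma ideal_genB S f g : ideal_gen S f -> ideal_gen S g -> ideal_gen S (f - g).
Proof. by move=> Sf /(ideal_genMl (-1)); rewrite mulN1r; apply: ideal_genD. Qed.

Lemma ideal_gen_sum S (J : eqType) (r : seq J) (F : J -> R) :
  (forall j, j \in r -> ideal_gen S (F j)) -> ideal_gen S (\sum_(j <- r) F j).
Proof.
elim: r => [|j r IHr] SF; first by rewrite big_nil; apply: ideal_gen0.
rewrite big_cons; apply: ideal_genD; first by apply: SF; rewrite inE eqxx.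
by apply: IHr => i ri; apply: SF; rewrite inE ri orbT.
Qed.

Lemma ideal_gen_sub S T f :
  (forall g, S g -> ideal_gen T g) -> ideal_gen S f -> ideal_gen T f.
Proof.
by move=> ST [s [Hs ->]]; apply: ideal_gen_sum => p /Hs /ST; apply: ideal_genMl.
Qed.

End IdealGen.

Section Substitution.
Variables (k : fieldType) (n : nat) (H : vT n -> Pol k n).

Lemma substv_var v : substv H (var k v) = H v.
Proof. by rewrite /substv /var mmapX mmap1U enum_rankK. Qed.

Lemma substvC c : substv H c%:MP = c%:MP.
Proof. exact: mmapC. Qed.

Lemma substvZ c p : substv H (c *: p) = c *: substv H p.
Proof. by rewrite /substv mmapZ mul_mpolyC. Qed.

End Substitution.

Section MatrixCoefficients.
Variables (k : fieldType) (n : nat).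
Local Notation P := (Pol k n).
Local Notation X := (Xmat k n).

HB.instance Definition _ (gamma : 'M[k]_n) :=
  GRing.RMorphism.copy (conj_act gamma) (substv _).

Section ConjActMorphism.
Variable gamma : 'M[k]_n.

Lemma conj_actD : {morph conj_act gamma : f g / f + g}.
Proof. exact: rmorphD. Qed.

Lemma conj_actB : {morph conj_act gamma : f g / f - g}.
Proof. exact: rmorphB. Qed.

Lemma conj_actM : {morph conj_act gamma : f g / f * g}.
Proof. exact: rmorphM. Qed.

Lemma conj_act_sum (J : Type) (r : seq J) (F : J -> P) :
  conj_act gamma (\sum_(j <- r) F j) = \sum_(j <- r) conj_act gamma (F j).
Proof. exact: rmorph_sum. Qed.

Lemma conj_actZ c (f : P) : conj_act gamma (c *: f) = c *: conj_act gamma f.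
Proof. exact: substvZ. Qed.

End ConjActMorphism.

Lemma ideal_genZ (S : P -> Prop) c f : ideal_gen S f -> ideal_gen S (c *: f).
Proof. by rewrite -mul_mpolyC; apply: ideal_genMl. Qed.

Lemma Cmat_sandwichE p m m' q (u : 'M[k]_(p, m)) (M : 'M[P]_(m, m'))
    (v : 'M[k]_(m', q)) i j :
  (Cmat n u *m M *m Cmat n v) i j = \sum_b \sum_a (u i a * v b j) *: M a b.
Proof.
rewrite mxE; apply: eq_bigr => b _; rewrite mxE mulr_suml; apply: eq_bigr => a _.
by rewrite !mxE mulrAC -mpolyCM mul_mpolyC.
Qed.

Definition mcoef (u : 'rV[k]_n) (v : 'cV[k]_n) : P :=
  (Cmat n u *m X *m Cmat n v) ord0 ord0.

Lemma mcoefZ c c' u v : mcoef (c *: u) (c' *: v) = (c * c') *: mcoef u v.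
Proof.
rewrite /mcoef !Cmat_sandwichE scaler_sumr; apply: eq_bigr => b _.
by rewrite scaler_sumr; apply: eq_bigr => a _; rewrite !mxE scalerA mulrACA.
Qed.

Lemma conj_act_mcoef gamma u v :
  conj_act gamma (mcoef u v) = mcoef (u *m invmx gamma) (gamma *m v).
Proof.
transitivity (map_mx (conj_act gamma) (Cmat n u *m X *m Cmat n v) ord0 ord0).
  by rewrite mxE.
rewrite !map_mxM.
have CmatK p q (A : 'M[k]_(p, q)) : map_mx (conj_act gamma) (Cmat n A) = Cmat n A.
  by apply/matrixP => i j; rewrite !mxE /conj_act substvC.
have -> : map_mx (conj_act gamma) X = Cmat n (invmx gamma) *m X *m Cmat n gamma.
  by apply/matrixP => i j; rewrite [LHS]mxE [X i j]mxE /conj_act /xv substv_var.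
by rewrite /mcoef !CmatK /Cmat !map_mxM !mulmxA.
Qed.

Variable Q : 'M[k]_n.
Hypothesis Q_unit : Q \in unitmx.

Definition ycoef a b := mcoef (row a Q) (col b (invmx Q)).

Lemma Cmat_sandwich_ycoef p q (u : 'M[k]_(p, n)) (v : 'M[k]_(n, q)) i j :
  (Cmat n u *m X *m Cmat n v) i j
  = \sum_b \sum_a ((u *m invmx Q) i a * (Q *m v) b j) *: ycoef a b.
Proof.
have YE : \matrix_(a, b) ycoef a b = Cmat n Q *m X *m Cmat n (invmx Q).
  apply/matrixP => a b; rewrite mxE /ycoef /mcoef !Cmat_sandwichE.
  by apply: eq_bigr => b' _; apply: eq_bigr => a' _; rewrite !mxE.
have -> : X = Cmat n (invmx Q) *m \matrix_(a, b) ycoef a b *m Cmat n Q.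
  rewrite YE !mulmxA /Cmat -map_mxM mulVmx // map_mx1 mul1mx.
  by rewrite -mulmxA -map_mxM mulVmx // map_mx1 mulmx1.
rewrite !mulmxA /Cmat -map_mxM -[_ *m _ *m map_mx _ Q *m _]mulmxA -map_mxM.
rewrite Cmat_sandwichE; apply: eq_bigr => b _; apply: eq_bigr => a _.
by rewrite mxE.
Qed.

End MatrixCoefficients.

Section EigenSums.
Variables (k : fieldType) (n : nat) (L : k -> Prop) (gamma : 'M[k]_n).
Hypothesis L_subgroup : subgroup_units L.
Local Notation P := (Pol k n).
Local Notation sig := (conj_act gamma).

Lemma Lclose_eigsp_eigvec lam mu c (v : 'cV[k]_n) :
  L mu -> c = lam * mu -> gamma *m v = c *: v -> Lclose_eigsp L gamma lam v.
Proof.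
move=> Lmu cE gv; exists [:: (c, v)]; rewrite big_seq1; split=> // p.
by rewrite inE => /eqP -> /=; split=> //; exists mu.
Qed.

Definition eigensum (e : P) := exists s : seq (k * P),
  (forall p, p \in s -> L p.1 /\ sig p.2 = p.1 *: p.2) /\ e = \sum_(p <- s) p.2.

Lemma eigensum0 : eigensum 0.
Proof. by exists [::]; rewrite big_nil. Qed.

Lemma eigensum_eigvec c x : L c -> sig x = c *: x -> eigensum x.
Proof.
move=> Lc sx; exists [:: (c, x)]; rewrite big_seq1; split=> // p.
by rewrite inE => /eqP ->.
Qed.

Lemma eigensum1 : eigensum 1.
Proof.
by case: L_subgroup => _ L1 _ _; apply: (eigensum_eigvec L1); rewrite rmorph1 scale1r.
Qed.

Lemma eigensumD e1 e2 : eigensum e1 -> eigensum e2 -> eigensum (e1 + e2).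
Proof.
move=> [s [Hs ->]] [t [Ht ->]]; exists (s ++ t); split; last by rewrite big_cat.
by move=> p; rewrite mem_cat => /orP [/Hs|/Ht].
Qed.

Lemma eigensum_sum (J : eqType) (r : seq J) (F : J -> P) :
  (forall j, j \in r -> eigensum (F j)) -> eigensum (\sum_(j <- r) F j).
Proof.
elim: r => [|j r IHr] EF; first by rewrite big_nil; apply: eigensum0.
rewrite big_cons; apply: eigensumD; first by apply: EF; rewrite inE eqxx.
by apply: IHr => i ri; apply: EF; rewrite inE ri orbT.
Qed.

Lemma eigensumZ c e : eigensum e -> eigensum (c *: e).
Proof.
move=> [s [Hs ->]]; rewrite scaler_sumr; apply: eigensum_sum => p /Hs [Lp sp].
by apply: (eigensum_eigvec Lp); rewrite conj_actZ sp !scalerA mulrC.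
Qed.

Lemma eigensumM e1 e2 : eigensum e1 -> eigensum e2 -> eigensum (e1 * e2).
Proof.
case: L_subgroup => _ _ LM _ [s [Hs ->]] [t [Ht ->]].
rewrite mulr_suml; apply: eigensum_sum => p /Hs [Lp sp].
rewrite mulr_sumr; apply: eigensum_sum => q /Ht [Lq sq].
apply: (eigensum_eigvec (LM _ _ Lp Lq)).
by rewrite conj_actM sp sq -scalerAl -scalerAr scalerA.
Qed.

End EigenSums.

Section EigenvalueSeparation.
Variables (k : fieldType) (n : nat) (gamma : 'M[k]_n) (K : Pol k n -> Prop).
Hypotheses (K0 : K 0) (KB : forall f g, K f -> K g -> K (f - g))
  (KZ : forall c f, K f -> K (c *: f)) (K_conj : forall f, K f -> K (conj_act gamma f)).
Local Notation P := (Pol k n).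
Local Notation sig := (conj_act gamma).

Let shift (c : k) (f : P) := sig f - c *: f.

Lemma shiftC a b f : shift a (shift b f) = shift b (shift a f).
Proof.
rewrite /shift !conj_actB !conj_actZ !scalerBr !scalerA mulrC.
by rewrite !opprB !addrA addrAC [RHS]addrAC -!addrA [- _ + (- _ + _)]addrCA.
Qed.

Lemma K_shift c f : K f -> K (shift c f).
Proof. by move=> Kf; apply: KB; [apply: K_conj | apply: KZ]. Qed.

(* Induction on the number of eigenvectors: [shift p.1] kills the first one and
   commutes with [shift lam], while [shift p.1 - shift lam] is the nonzero
   scalar [lam - p.1]. *)
Lemma eigensum_separation lam (s : seq (k * P)) :
  (forall p, p \in s -> p.1 != lam /\ sig p.2 = p.1 *: p.2) ->
  K (shift lam (\sum_(p <- s) p.2)) -> K (\sum_(p <- s) p.2).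
Proof.
move: {2}(size s) (erefl (size s)) => N; elim: N s => [|N IHN] [|p s] //= sz s_eig;
  first by rewrite big_nil.
set e := \sum_(q <- p :: s) q.2 => Ke.
have [p_lam sp] := s_eig p (mem_head _ _).
have s_eig' q : q \in s -> q.1 != lam /\ sig q.2 = q.1 *: q.2.
  by move=> qs; apply: s_eig; rewrite inE qs orbT.
pose s' := [seq (q.1, (q.1 - p.1) *: q.2) | q <- s].
have s'E : \sum_(q <- s') q.2 = shift p.1 e.
  rewrite /shift /e big_cons conj_actD sp big_map conj_act_sum scalerDr scaler_sumr.
  rewrite opprD addrACA subrr add0r -sumrB !big_seq.
  by apply: eq_bigr => q /s_eig' [_ sq]; rewrite sq -scalerBl.
have Kpe : K (shift p.1 e).
  rewrite -s'E; apply: IHN; first by rewrite size_map; case: sz.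
    move=> q /mapP [q0 /s_eig' [q0_lam sq0] ->] /=; split=> //.
    by rewrite conj_actZ sq0 !scalerA mulrC.
  by rewrite s'E shiftC; apply: K_shift.
have : K ((lam - p.1)^-1 *: (shift p.1 e - shift lam e)) by apply/KZ/KB.
have -> : shift p.1 e - shift lam e = (lam - p.1) *: e.
  by rewrite /shift opprB addrC addrA subrK scalerBl.
by rewrite scalerA mulVf ?scale1r // subr_eq0 eq_sym.
Qed.

End EigenvalueSeparation.

Section DiagonalCoordinates.
Variables (k : fieldType) (n : nat) (gamma Q : 'M[k]_n).
Hypotheses (Q_unit : Q \in unitmx) (gamma_unit : gamma \in unitmx)
  (QgQ_diag : is_diag_mx (Q *m gamma *m invmx Q)).
Local Notation d a := ((Q *m gamma *m invmx Q) a a).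
Local Notation Qi := (invmx Q).
Local Notation ycoef := (ycoef Q).

Lemma diag_entryE : exists2 r : 'rV[k]_n,
  Q *m gamma *m Qi = diag_mx r & forall a, d a = r 0 a.
Proof.
have [r ->] := diag_mxP _ QgQ_diag.
by exists r => // a; rewrite mxE eqxx mulr1n.
Qed.

Lemma row_Q_eigen a : row a Q *m gamma = d a *: row a Q.
Proof.
have [r Dr dE] := diag_entryE; rewrite dE -row_mul.
have -> : Q *m gamma = Q *m gamma *m Qi *m Q by rewrite mulmxKV.
by rewrite Dr mul_diag_mx; apply/rowP => j; rewrite !mxE.
Qed.

Lemma col_Qi_eigen b : gamma *m col b Qi = d b *: col b Qi.
Proof.
have [r Dr dE] := diag_entryE; rewrite dE colE mulmxA.
have -> : gamma *m Qi = Qi *m (Q *m gamma *m Qi) by rewrite [RHS]mulmxA mulKmx.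
rewrite -colE Dr mul_mx_diag -colE.
by apply/colP => j; rewrite !mxE mulrC.
Qed.

Lemma diag_entry_neq0 a : d a != 0.
Proof.
apply/eqP => da0.
have : row a Q *m gamma *m (invmx gamma *m Qi) = row a (1%:M : 'M[k]_n).
  by rewrite mulmxA mulmxK // -row_mul mulmxV.
rewrite row_Q_eigen da0 scale0r mul0mx => /rowP /(_ a); rewrite !mxE eqxx /=.
by move/eqP; rewrite eq_sym oner_eq0.
Qed.

Lemma row_Q_invmx a : row a Q *m invmx gamma = (d a)^-1 *: row a Q.
Proof.
apply: (canRL (scalerK (diag_entry_neq0 a))).
by rewrite scalemxAl -row_Q_eigen mulmxK.
Qed.

Lemma conj_act_ycoef a b : conj_act gamma (ycoef a b) = (d b / d a) *: ycoef a b.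
Proof. by rewrite conj_act_mcoef row_Q_invmx col_Qi_eigen mcoefZ mulrC. Qed.

Lemma row_Q_eigen_orthogonal a (v : 'cV[k]_n) c :
  gamma *m v = c *: v -> c != d a -> row a Q *m v = 0.
Proof.
move=> gv ne; apply: (scalerI (_ : d a - c != 0)); first by rewrite subr_eq0 eq_sym.
by rewrite scaler0 scalerBl scalemxAl -row_Q_eigen -mulmxA gv -scalemxAr subrr.
Qed.

Variable L : k -> Prop.
Hypothesis L_subgroup : subgroup_units L.

Lemma Lclose_eigsp_row_Q a lam w : Lclose_eigsp L gamma lam w ->
  row a Q *m w != 0 -> exists2 mu, L mu & d a = lam * mu.
Proof.
move=> [s [s_eig ->]] /eqP nz; apply: NNPP => no_mu; apply: nz.
rewrite mulmx_sumr big1_seq // => p /s_eig [[mu [Lmu p1E]] gp].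
apply: (row_Q_eigen_orthogonal gp); apply/eqP => p1_da; apply: no_mu.
by exists mu => //; rewrite -p1_da.
Qed.

Lemma CGL_gens_ycoef a b : ~ L (d b / d a) -> CGL_gens L gamma (ycoef a b).
Proof.
case: L_subgroup => _ L1 _ LV nL; exists (d b), (col b Qi), (row a Q); split=> //.
  exact: (Lclose_eigsp_eigvec L1 (esym (mulr1 _)) (col_Qi_eigen b)).
move=> u /(Lclose_eigsp_row_Q (a := a)) Lu; apply/eqP.
case: eqP => // /eqP /Lu [mu Lmu daE].
case: nL; rewrite daE invfM mulrA mulfV ?diag_entry_neq0 // mul1r; exact: LV.
Qed.

Lemma CGL_gens_expand g : CGL_gens L gamma g -> exists c : 'I_n -> 'I_n -> k,
  (forall a b, c a b != 0 -> ~ L (d b / d a)) /\ g = \sum_b \sum_a c a b *: ycoef a b.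
Proof.
move=> [lam [w [phi [w_eig phi_w ->]]]].
exists (fun a b => (phi *m Qi) 0 a * (Q *m w) b 0); split; last first.
  exact: Cmat_sandwich_ycoef.
move=> a b; rewrite mulf_eq0 negb_or => /andP [phi_a w_b] L_ba.
have w_b' : row b Q *m w != 0.
  by apply: contra_neq w_b; rewrite -row_mul => /rowP /(_ 0); rewrite !mxE.
have [mu Lmu dbE] := Lclose_eigsp_row_Q w_eig w_b'.
case: L_subgroup => _ _ LM LV.
have col_a : Lclose_eigsp L gamma lam (col a Qi).
  apply: (Lclose_eigsp_eigvec (LM _ _ Lmu (LV _ L_ba))) (col_Qi_eigen a).
  by rewrite mulrA -dbE invfM invrK mulrA mulfV ?diag_entry_neq0 // mul1r.
move/eqP: phi_a; apply.
by have := phi_w _ col_a; rewrite colE mulmxA -colE => /colP /(_ 0); rewrite !mxE.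
Qed.

Variable I : Pol k n -> Prop.
Hypotheses (I0 : I 0) (I_conj : forall f, I f -> I (conj_act gamma f)).

Definition cent_ideal :=
  ideal_gen (fun g => I g \/ exists a b, ~ L (d b / d a) /\ g = ycoef a b).

Lemma cent_ideal_conj f : cent_ideal f -> cent_ideal (conj_act gamma f).
Proof.
move=> [s [s_gen ->]]; rewrite conj_act_sum; apply: ideal_gen_sum => p /s_gen p_gen.
rewrite conj_actM; apply: ideal_genMl; case: p_gen => [Ip | [a [b [nL ->]]]].
  by apply: ideal_gen_mem; left; apply: I_conj.
by rewrite conj_act_ycoef; apply/ideal_genZ/ideal_gen_mem; right; exists a, b.
Qed.

Definition cent_split f :=
  exists g e, [/\ cent_ideal g, eigensum L gamma e & f = g + e].

Lemma cent_split_ideal f : cent_ideal f -> cent_split f.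
Proof. by exists f, 0; split; rewrite ?addr0 //; apply: eigensum0. Qed.

Lemma cent_split_eigensum e : eigensum L gamma e -> cent_split e.
Proof. by exists 0, e; split; rewrite ?add0r //; apply: ideal_gen0. Qed.

Lemma cent_splitD f f' : cent_split f -> cent_split f' -> cent_split (f + f').
Proof.
move=> [g [e [Kg Ee ->]]] [g' [e' [Kg' Ee' ->]]]; exists (g + g'), (e + e').
by split; [apply: ideal_genD | apply: eigensumD | rewrite addrACA].
Qed.

Lemma cent_splitZ c f : cent_split f -> cent_split (c *: f).
Proof.
move=> [g [e [Kg Ee ->]]]; exists (c *: g), (c *: e).
by split; [apply: ideal_genZ | apply: eigensumZ | rewrite scalerDr].
Qed.

Lemma cent_splitM f f' : cent_split f -> cent_split f' -> cent_split (f * f').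
Proof.
move=> [g [e [Kg Ee ->]]] [g' [e' [Kg' Ee' ->]]].
exists (g * (g' + e') + e * g'), (e * e'); split.
- by apply: ideal_genD; [rewrite mulrC |]; apply: ideal_genMl.
- exact: eigensumM.
- by rewrite mulrDl [e * (_ + _)]mulrDr addrA.
Qed.

Lemma cent_split_sum (J : eqType) (r : seq J) (F : J -> Pol k n) :
  (forall j, j \in r -> cent_split (F j)) -> cent_split (\sum_(j <- r) F j).
Proof.
elim: r => [|j r IHr] SF; first by rewrite big_nil; apply/cent_split_ideal/ideal_gen0.
rewrite big_cons; apply: cent_splitD; first by apply: SF; rewrite inE eqxx.
by apply: IHr => i ri; apply: SF; rewrite inE ri orbT.
Qed.

Lemma cent_split_var v : cent_split (var k v).
Proof.
have L1 : L 1 by case: L_subgroup.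
case: v => [[i j]|]; last first.
  apply/cent_split_eigensum/(eigensum_eigvec L1).
  by rewrite /conj_act substv_var scale1r.
have -> : var k (Some (i, j)) = (Cmat n 1%:M *m Xmat k n *m Cmat n 1%:M) i j.
  by rewrite /Cmat map_mx1 mulmx1 mul1mx mxE.
rewrite (Cmat_sandwich_ycoef Q_unit); apply: cent_split_sum => b _.
apply: cent_split_sum => a _; apply: cent_splitZ.
have [L_ba | nL_ba] := classic (L (d b / d a)).
  exact/cent_split_eigensum/(eigensum_eigvec L_ba)/conj_act_ycoef.
by apply/cent_split_ideal/ideal_gen_mem; right; exists a, b.
Qed.

Lemma cent_split_all f : cent_split f.
Proof.
have split1 : cent_split 1 by apply/cent_split_eigensum/eigensum1.
elim/mpolyind: f => [|c m p _ _ Sp]; first exact/cent_split_ideal/ideal_gen0.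
apply: cent_splitD => //; apply: cent_splitZ; rewrite mpolyXE_id.
apply: (big_ind cent_split) => // [|i _]; first exact: cent_splitM.
have -> : 'X_i = var k (enum_val i) by rewrite /var enum_valK.
elim: (m i) => [|e IHe]; rewrite ?expr0 // exprS.
by apply: cent_splitM => //; apply: cent_split_var.
Qed.

Lemma eigvec_outside_cent_ideal g : eigvec_outside L gamma I g -> cent_ideal g.
Proof.
move=> [lam [nL _ I_eig]].
have [g0 [e [K_g0 [s [s_eig eE]] gE]]] := cent_split_all g.
rewrite gE; apply: ideal_genD => //; rewrite eE.
apply: (eigensum_separation (@ideal_gen0 _ _) (@ideal_genB _ _) (@ideal_genZ _ _ _)
  cent_ideal_conj (lam := lam)).
  move=> p /s_eig [Lp sp]; split=> //.
  by apply/eqP => p_lam; apply: nL; rewrite -p_lam.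
rewrite -eE.
have -> : conj_act gamma e - lam *: e = (conj_act gamma g - lam *: g)
    - (conj_act gamma g0 - lam *: g0).
  by rewrite gE conj_actD scalerDr opprD addrACA [_ - _ + (_ - _)]addrC addrK.
apply: ideal_genB; first by apply: ideal_gen_mem; left.
by apply: ideal_genB; [apply: cent_ideal_conj | apply: ideal_genZ].
Qed.

Lemma cent_ideal_CGL g :
  cent_ideal g -> ideal_gen (fun h => I h \/ CGL_gens L gamma h) g.
Proof.
apply: ideal_gen_sub => h [Ih | [a [b [nL ->]]]]; apply: ideal_gen_mem; first by left.
by right; apply: CGL_gens_ycoef.
Qed.

Lemma CGL_gens_eigvec_outside g : CGL_gens L gamma g ->
  ideal_gen (fun h => I h \/ eigvec_outside L gamma I h) g.
Proof.
move=> /CGL_gens_expand [c [c_bad ->]].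
apply: ideal_gen_sum => b _; apply: ideal_gen_sum => a _.
have [->|c_ab] := eqVneq (c a b) 0; first by rewrite scale0r; apply: ideal_gen0.
apply/ideal_genZ/ideal_gen_mem.
have [Iy | nIy] := classic (I (ycoef a b)); [left | right] => //.
exists (d b / d a); split=> //; first exact: c_bad.
by rewrite conj_act_ycoef subrr.
Qed.

End DiagonalCoordinates.

Theorem proposition4p13 (k : fieldType) (n : nat) (I : Pol k n -> Prop)
    (gamma : 'M[k]_n) (L : k -> Prop) :
  closed_subgroup_ideal I ->
  normalises gamma I ->
  diagonalizable gamma ->
  subgroup_units L ->
  forall f : Pol k n,
    ideal_gen (fun g => I g \/ CGL_gens L gamma g) f <->
    ideal_gen (fun g => I g \/ eigvec_outside L gamma I g) f.
Proof.
move=> [[I0 _ _] _ _ _ _] [gamma_unit I_conj_inv] [Q Q_unit QgQ] L_subgroup f.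
have I_conj g : I g -> I (conj_act gamma g) by case/I_conj_inv.
have QgQ_diag : is_diag_mx (Q *m gamma *m invmx Q) by rewrite -conjumx.
split; apply: ideal_gen_sub => g [Ig | Hg]; try by apply: ideal_gen_mem; left.
  exact: (CGL_gens_eigvec_outside Q_unit gamma_unit QgQ_diag L_subgroup I0).
apply: (cent_ideal_CGL Q_unit gamma_unit QgQ_diag L_subgroup).
exact: (eigvec_outside_cent_ideal Q_unit gamma_unit QgQ_diag L_subgroup I_conj).
Qed.
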